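(* For all integers $k,l\ge1$, $sat^*([k]\times[l],\vee_2)=La^*([k]\times[l],\vee_2)=k+l-1$.
   Context: $[k]\times[l]$ is ordered coordinatewise. $\vee_2$ is the poset on three elements $a,b_1,b_2$ whose only relations are $a<b_1,a<b_2$. For posets $P,R$, $P$ is a strong subposet of $R$ if there is an injection $i:P\to R$ with $p\le_P p'\iff i(p)\le_R i(p')$. A subset $F\subseteq Q$ is strong $P$-free if $P$ is not a strong subposet of $F$; it is strong $P$-saturated if it is strong $P$-free and for every $x\in Q\setminus F$, $P$ is a strong subposet of $F\cup\{x\}$. $La^*(Q,P)$ is the maximum size of a strong $P$-free subset of $Q$ and $sat^*(Q,P)$ the minimum size of a strong $P$-saturated subset of $Q$. *)

From mathcomp Require Import all_boot.
Set Implicit Arguments. Unset Strict Implicit. Unset Printing Implicit Defensive.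

Definition strong_sub (P Q : finType) (leP : rel P) (leQ : rel Q)
    (F : {set Q}) : bool :=
  [exists i : {ffun P -> Q},
    [&& injectiveb i, [forall p, i p \in F]
      & [forall p, forall p', leP p p' == leQ (i p) (i p')]]].

Definition strong_free (P Q : finType) (leP : rel P) (leQ : rel Q)
    (F : {set Q}) : bool := ~~ strong_sub leP leQ F.

Definition strong_saturated (P Q : finType) (leP : rel P) (leQ : rel Q)
    (F : {set Q}) : bool :=
  strong_free leP leQ F &&
  [forall x, (x \notin F) ==> strong_sub leP leQ (x |: F)].

Definition La_star (P Q : finType) (leP : rel P) (leQ : rel Q) : nat :=
  \max_(F : {set Q} | strong_free leP leQ F) #|F|.

(* sat^*(Q,P): minimum size of a strong P-saturated subset of Q
   (the default value #|Q| is irrelevant: saturated sets always exist and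
   have size at most #|Q|). *)
Definition sat_star (P Q : finType) (leP : rel P) (leQ : rel Q) : nat :=
  \big[minn/#|Q|]_(F : {set Q} | strong_saturated leP leQ F) #|F|.

(* The grid [k] x [l], with [k] = {0,...,k-1} (order-isomorphic to {1..k}),
   ordered coordinatewise. *)
Definition grid_le (k l : nat) : rel ('I_k * 'I_l) :=
  fun x y => (x.1 <= y.1) && (x.2 <= y.2).

(* The poset V_2 on 'I_3: element 0 is a, elements 1 and 2 are b_1, b_2;
   the only strict relations are a < b_1 and a < b_2. *)
Definition vee2_le : rel 'I_3 :=
  fun x y => (x == y) || (val x == 0).

(* A subset F of a poset is strong V_2-free exactly when, for every point of
   F, the points of F above it form a chain.  In the grid, split F into the
   points that top their column in F and the others.  There is at most one
   top per column.  A non-top point x has a point w of F above it in its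
   column; a point of F right of x in its row would be above x but
   incomparable to w, so x is the rightmost point of its row, and x is not in
   the top row.  Hence |F| <= k + (l - 1).  If F is maximal, every column
   and (by symmetry) every row meets F, and the rightmost point of each
   non-top row is not the top of its column: otherwise a point could be added
   in that column without creating a V_2.  So maximal sets have exactly
   k + l - 1 points, which gives sat* = La* = k + l - 1. *)

From mathcomp Require Import all_boot zify.
Set Implicit Arguments. Unset Strict Implicit. Unset Printing Implicit Defensive.

Lemma geq_bigmin_cond (I : finType) (P : pred I) (F : I -> nat) x i0 :
  P i0 -> \big[minn/x]_(i | P i) F i <= F i0.
Proof.
move=> Pi0; have : i0 \in index_enum I by rewrite mem_index_enum.
elim: (index_enum I) => // i r IHr; rewrite inE big_cons.
case/predU1P=> [<-|/IHr le_r]; first by rewrite Pi0 geq_minl.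
by case: (P i) => //; rewrite geq_min le_r orbT.
Qed.

Section ExtremalSizes.
Variables (P Q : finType) (leP : rel P) (leQ : rel Q) (p0 : P).

Lemma strong_free_set0 : strong_free leP leQ set0.
Proof. by apply/existsP=> -[i /and3P[_ /forallP/(_ p0)]]; rewrite inE. Qed.

Lemma exists_saturated_La_star :
  exists2 F, strong_saturated leP leQ F & #|F| = La_star leP leQ.
Proof.
have [F Ffree Fmax] :=
  @arg_maxnP _ set0 (strong_free leP leQ) (fun F => #|F|) strong_free_set0.
exists F; last by apply/eqP; rewrite eqn_leq leq_bigmax_cond //=; apply/bigmax_leqP.
rewrite /strong_saturated Ffree; apply/forallP=> x; apply/implyP=> xF.
apply: contraT=> xFfree; have := Fmax _ xFfree.
by rewrite cardsU1 xF /= add1n ltnn.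
Qed.

Lemma sat_star_le_La_star : sat_star leP leQ <= La_star leP leQ.
Proof.
have [F Fsat <-] := exists_saturated_La_star.
exact: geq_bigmin_cond.
Qed.

Lemma La_star_leq n :
  (forall F, strong_free leP leQ F -> #|F| <= n) -> La_star leP leQ <= n.
Proof. by move=> ub; apply/bigmax_leqP. Qed.

Lemma sat_star_geq n :
  (forall F, strong_saturated leP leQ F -> n <= #|F|) -> n <= sat_star leP leQ.
Proof.
move=> lb; apply: (big_ind (fun m => n <= m)) => //; last first.
  by move=> m1 m2 le1 le2; rewrite leq_min le1.
have [F Fsat _] := exists_saturated_La_star.
exact: leq_trans (lb F Fsat) (max_card _).
Qed.

Lemma sat_star_La_star_eq n :
  (forall F, strong_free leP leQ F -> #|F| <= n) ->
  (forall F, strong_saturated leP leQ F -> n <= #|F|) ->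
  sat_star leP leQ = n /\ La_star leP leQ = n.
Proof.
move=> ub lb; have := sat_star_le_La_star; have := La_star_leq ub.
have := sat_star_geq lb; lia.
Qed.

End ExtremalSizes.

Section VeeFree.
Variables (T : finType) (le : rel T).

Definition vee_free (F : {set T}) : Prop :=
  forall a b c, a \in F -> b \in F -> c \in F ->
    le a b -> le a c -> le b c \/ le c b.

Definition vee_maximal (F : {set T}) : Prop :=
  vee_free F /\ forall x, x \notin F -> ~ vee_free (x |: F).

Hypotheses (le_refl : reflexive le) (le_trans : transitive le).

Lemma strong_sub_vee2 (F : {set T}) a b c :
  a \in F -> b \in F -> c \in F -> le a b -> le a c ->
  ~~ le b c -> ~~ le c b -> strong_sub vee2_le le F.
Proof.
move=> aF bF cF le_ab le_ac nle_bc nle_cb.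
have nle_ba : ~~ le b a by apply: contra nle_bc => /le_trans; apply.
have nle_ca : ~~ le c a by apply: contra nle_cb => /le_trans; apply.
have neq_ab : a != b by apply: contraNneq nle_bc => <-.
have neq_ac : a != c by apply: contraNneq nle_cb => <-.
have neq_bc : b != c by apply: contraNneq nle_bc => ->.
apply/existsP; exists [ffun p : 'I_3 => nth a [:: a; b; c] p].
apply/and3P; split.
- have abc_uniq : uniq [:: a; b; c] by rewrite /= !inE negb_or neq_ab neq_ac neq_bc.
  apply/injectiveP=> p q; rewrite !ffunE => /eqP.
  by rewrite nth_uniq // => /eqP/val_inj.
- by apply/forallP=> -[[|[|[|p]]] hp]; rewrite ffunE.
- apply/forallP=> -[[|[|[|p]]] hp] //; apply/forallP=> -[[|[|[|q]]] hq] //;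
  by rewrite !ffunE /vee2_le /= ?le_refl ?le_ab ?le_ac ?(negPf nle_ba)
    ?(negPf nle_ca) ?(negPf nle_bc) ?(negPf nle_cb).
Qed.

Lemma strong_free_veeP (F : {set T}) :
  reflect (vee_free F) (strong_free vee2_le le F).
Proof.
apply: (iffP idP) => [Ffree a b c aF bF cF le_ab le_ac | Fvee].
  case le_bc: (le b c); first by left.
  case le_cb: (le c b); first by right.
  by case/negP: Ffree; apply: (strong_sub_vee2 aF bF cF); rewrite ?le_bc ?le_cb.
apply/existsP=> -[i /and3P[_ /forallP iF /forallP i_mono]].
have leiE p q : le (i p) (i q) = vee2_le p q by move/forallP/(_ q)/eqP: (i_mono p).
have := Fvee (i ord0) (i (@Ordinal 3 1 isT)) (i (@Ordinal 3 2 isT)) (iF _) (iF _) (iF _).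
by rewrite !leiE; case=> //; case.
Qed.

Lemma strong_saturated_veeP (F : {set T}) :
  reflect (vee_maximal F) (strong_saturated vee2_le le F).
Proof.
apply: (iffP andP) => -[/strong_free_veeP Fvee Fmax]; split=> //.
  move=> x xF /strong_free_veeP; apply/negP.
  by move/forallP/(_ x): Fmax; rewrite xF /strong_free negbK.
apply/forallP=> x; apply/implyP=> xF; apply: contraT.
by move/strong_free_veeP/(Fmax x xF).
Qed.

Lemma vee_free_setU1 (F : {set T}) x : vee_free F ->
  (forall q s, q \in F -> s \in F -> le x q -> le x s -> le q s \/ le s q) ->
  (forall p s, p \in F -> s \in F -> le p x -> le p s -> le x s \/ le s x) ->
  vee_free (x |: F).
Proof.
move=> Fvee above below a b c; rewrite !in_setU1.
case/predU1P=> [->|aF]; case/predU1P=> [->|bF]; case/predU1P=> [->|cF] le_ab le_ac.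
all: first [by left | by right | by left; apply: le_refl | exact: above
  | exact: (below _ _ aF cF) | by case: (below _ _ aF bF le_ac le_ab); [right|left]
  | exact: (Fvee a b c)].
Qed.

End VeeFree.

Section VeeTransport.
Variables (T T' : finType) (le : rel T) (le' : rel T') (f : T -> T') (g : T' -> T).
Hypothesis gK : cancel g f.
Hypothesis f_mono : {mono f : x y / le x y >-> le' x y}.

Lemma vee_free_imset (F : {set T}) : vee_free le' (f @: F) <-> vee_free le F.
Proof.
split=> [Fvee a b c aF bF cF | Fvee fa fb fc].
  by rewrite -!f_mono; apply: Fvee; apply: imset_f.
case/imsetP=> a aF -> /imsetP[b bF ->] /imsetP[c cF ->].
by rewrite !f_mono; apply: Fvee.
Qed.

Lemma vee_maximal_imset (F : {set T}) :
  vee_maximal le F -> vee_maximal le' (f @: F).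
Proof.
case=> Fvee Fmax; split=> [|x xF]; first exact/vee_free_imset.
have gxF : g x \notin F by apply: contra xF => /(imset_f f); rewrite gK.
by rewrite -[x]gK -imsetU1 vee_free_imset; apply: Fmax.
Qed.

End VeeTransport.

Lemma grid_le_refl k l : reflexive (@grid_le k l).
Proof. by move=> x; rewrite /grid_le !leqnn. Qed.

Lemma grid_le_trans k l : transitive (@grid_le k l).
Proof.
by move=> y x z /andP[x1 x2] /andP[y1 y2]; rewrite /grid_le !(leq_trans x1, leq_trans x2).
Qed.

Lemma grid_le_swap k l :
  {mono @swap_pair 'I_k 'I_l : x y / grid_le x y >-> grid_le x y}.
Proof. by move=> x y; rewrite /grid_le andbC. Qed.

Lemma pair_eq_nat k l (x y : 'I_k * 'I_l) :
  x.1 = y.1 :> nat -> x.2 = y.2 :> nat -> x = y.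
Proof. by case: x y => [x1 x2] [y1 y2] /= /val_inj-> /val_inj->. Qed.

Section Grid.
Variables k l : nat.
Local Notation T := ('I_k.+1 * 'I_l.+1)%type.
Local Notation le := (@grid_le k.+1 l.+1).

Definition col_top (F : {set T}) : {set T} :=
  [set x in F | [forall y in F, (y.1 == x.1) ==> (y.2 <= x.2)]].

Definition col_low (F : {set T}) : {set T} := F :\: col_top F.

Lemma col_topP (F : {set T}) (x : T) :
  reflect (x \in F /\ forall y, y \in F -> y.1 = x.1 -> y.2 <= x.2)
          (x \in col_top F).
Proof.
apply: (iffP setIdP) => -[xF xtop]; split=> //.
  by move=> y yF yx; move/forall_inP/(_ y yF): xtop; rewrite yx eqxx.
by apply/forall_inP=> y yF; apply/implyP=> /eqP; apply: xtop.
Qed.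

Lemma col_lowP (F : {set T}) (x : T) :
  reflect (x \in F /\ exists2 y, y \in F & y.1 = x.1 /\ x.2 < y.2)
          (x \in col_low F).
Proof.
apply: (iffP setDP) => -[xF xlow]; split=> //.
  move: xlow; rewrite inE xF => /forall_inPn[y yF].
  by rewrite negb_imply -ltnNge => /andP[/eqP yx xy]; exists y.
apply/col_topP=> -[_ xtop]; case: xlow => y yF [yx xy].
by have := xtop y yF yx; rewrite leqNgt xy.
Qed.

Lemma card_col_top_low (F : {set T}) : #|F| = #|col_top F| + #|col_low F|.
Proof.
rewrite -(cardsID (col_top F) F) (setIidPr _) //.
by apply/subsetP=> x /col_topP[].
Qed.

Lemma card_col_top (F : {set T}) : #|col_top F| = #|[set x.1 | x in F]|.
Proof.
rewrite -(card_in_imset (f := fst)); last first.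
  move=> x y /col_topP[xF xtop] /col_topP[yF ytop] xy.
  by apply: pair_eq_nat; [rewrite xy | apply: anti_leq; rewrite xtop ?ytop].
congr #|pred_of_set _|; apply/eqP; rewrite eqEsubset imsetS /=; last first.
  by apply/subsetP=> x /col_topP[].
apply/subsetP=> _ /imsetP[x xF ->].
pose in_col y := (y \in F) && (y.1 == x.1).
have [|y /andP[yF /eqP yx] ymax] := @arg_maxnP _ x in_col (fun y => val y.2).
  by rewrite /in_col xF eqxx.
rewrite -yx imset_f //; apply/col_topP; split=> // z zF zy.
by apply: ymax; rewrite /in_col zF zy yx eqxx.
Qed.

Lemma col_low_row_max (F : {set T}) x y : vee_free le F ->
  x \in col_low F -> y \in F -> y.2 = x.2 -> y.1 <= x.1.
Proof.
move=> Fvee /col_lowP[xF [w wF [wx xw]]] yF yx; rewrite leqNgt; apply/negP=> xy.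
have le_xw : le x w by rewrite /grid_le wx leqnn ltnW.
have le_xy : le x y by rewrite /grid_le yx leqnn ltnW.
case: (Fvee x w y xF wF yF le_xw le_xy) => /andP[le1 le2].
  by move: le2; rewrite yx leqNgt xw.
by move: le1; rewrite wx leqNgt xy.
Qed.

Lemma card_col_low (F : {set T}) : vee_free le F ->
  #|col_low F| = #|[set x.2 | x in col_low F]|.
Proof.
move=> Fvee; rewrite card_in_imset // => x y xlow ylow xy.
have [xF yF] : x \in F /\ y \in F by move: xlow ylow => /setDP[? _] /setDP[].
apply: pair_eq_nat; last by rewrite xy.
by apply/eqP; rewrite eqn_leq !(col_low_row_max Fvee) ?xy.
Qed.

Lemma col_low_below_top (F : {set T}) x : x \in col_low F -> x.2 != ord_max.
Proof.
case/col_lowP=> _ [w _ [_ xw]]; rewrite -val_eqE /= neq_ltn.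
by rewrite (leq_trans xw) // -ltnS.
Qed.

Lemma card_vee_free_grid (F : {set T}) : vee_free le F -> #|F| <= k.+1 + l.
Proof.
move=> Fvee; rewrite card_col_top_low card_col_top card_col_low //.
apply: leq_add; first by apply: leq_trans (max_card _) _; rewrite card_ord.
apply: leq_trans (_ : _ <= #|[set~ (ord_max : 'I_l.+1)]|) _.
  apply/subset_leq_card/subsetP=> _ /imsetP[x xlow ->].
  by rewrite !inE (col_low_below_top xlow).
by rewrite cardsC1 card_ord.
Qed.

(* If [F] has no point in column [c] at height [>= t], the point of column
   [c] at the least height of a point of [S] (or the top one, if [S] is empty)
   can be added to [F].  Used with [t = 0] for a missed column, and with
   [t = r + 1] above the rightmost point of row [r] when that point tops its
   column. *)
Section ColumnGap.
Variables (F : {set T}) (c : 'I_k.+1) (t : nat).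
Hypothesis Fmax : vee_maximal le F.
Hypothesis col_below : forall y, y \in F -> y.1 = c -> y.2 < t.
Hypothesis right_below_unreachable :
  forall p s, p \in F -> s \in F -> p.1 <= c < s.1 -> s.2 < t -> ~~ le p s.

Let S := [set z in F | [&& c < z.1, t <= z.2 & [exists y in F, (y.1 <= c) && le y z]]].

Lemma vee_free_add_col_top : S = set0 -> vee_free le ((c, ord_max) |: F).
Proof.
move=> S0; apply: (vee_free_setU1 (@grid_le_refl _ _) Fmax.1).
  move=> [q1 q2] [s1 s2] _ _ /andP[_ /= xq] /andP[_ /= xs]; rewrite /grid_le /=.
  by have := ltn_ord q2; have := ltn_ord s2; lia.
move=> p [s1 s2] pF sF /andP[pc _] ps; rewrite /grid_le /=.
have := ltn_ord s2; case: (leqP s1 c) => [sc | cs]; first by lia.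
case: (ltnP s2 t) => [st | ts].
  by rewrite (negPf (right_below_unreachable pF sF _ st)) /= ?pc in ps.
have : (s1, s2) \in S by rewrite inE sF cs ts; apply/exists_inP; exists p; rewrite ?pc.
by rewrite S0 inE.
Qed.

Lemma vee_free_add_col_min zs : zs \in S -> (forall z, z \in S -> zs.2 <= z.2) ->
  vee_free le ((c, zs.2) |: F).
Proof.
case: zs => z1 z2 /setIdP[zF /and3P[/= cz tz]].
case/exists_inP=> -[y1 y2] yF /andP[/= yc yz] zmin.
have Fvee := Fmax.1; apply: (vee_free_setU1 (@grid_le_refl _ _) Fvee).
  move=> [q1 q2] [s1 s2] qF sF xq xs; apply: (Fvee _ _ _ yF qF sF).
    by move: yz xq; rewrite /grid_le /=; lia.
  by move: yz xs; rewrite /grid_le /=; lia.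
move=> [p1 p2] [s1 s2] pF sF /andP[/= pc pz] ps.
have pzs : le (p1, p2) (z1, z2) by rewrite /grid_le /=; lia.
have zs_cmp := Fvee _ _ _ pF zF sF pzs ps.
case: (ltnP c s1) => cs; last by move: zs_cmp; rewrite /grid_le /=; lia.
case: (ltnP s2 t) => [st | ts].
  by rewrite (negPf (right_below_unreachable pF sF _ st)) /= ?pc in ps.
have /zmin /= : (s1, s2) \in S.
  by rewrite inE sF cs ts; apply/exists_inP; exists (p1, p2); rewrite ?pc.
by rewrite /grid_le /=; lia.
Qed.

Lemma vee_maximal_col_gap : t <= l -> False.
Proof.
move=> tl; have [S0 | [z zS]] := set_0Vmem S.
  apply: (Fmax.2 (c, ord_max)) (vee_free_add_col_top S0).
  by apply/negP=> /col_below/(_ erefl); rewrite ltnNge tl.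
have [zs zsS zmin] := @arg_minnP _ z (fun z => z \in S) (fun z : T => val z.2) zS.
apply: (Fmax.2 (c, zs.2)) (vee_free_add_col_min zsS zmin).
apply/negP=> /col_below/(_ erefl) /=; rewrite ltnNge.
by case/setIdP: zsS => _ /and3P[_ ->].
Qed.

End ColumnGap.

Lemma vee_maximal_cols (F : {set T}) : vee_maximal le F -> [set x.1 | x in F] = setT.
Proof.
move=> Fmax; apply/setP=> c; rewrite inE; apply: contraT=> cF; exfalso.
apply: (vee_maximal_col_gap (c := c) (t := 0) Fmax) => // y yF yc.
by case/negP: cF; rewrite -yc imset_f.
Qed.

End Grid.

Lemma vee_maximal_rows k l (F : {set 'I_k.+1 * 'I_l.+1}) :
  vee_maximal (@grid_le k.+1 l.+1) F -> [set x.2 | x in F] = setT.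
Proof.
move=> Fmax; have Fmax' := vee_maximal_imset swap_pairK (@grid_le_swap _ _) Fmax.
by rewrite -(vee_maximal_cols Fmax') -imset_comp.
Qed.

Section GridLowerBound.
Variables k l : nat.
Local Notation T := ('I_k.+1 * 'I_l.+1)%type.
Local Notation le := (@grid_le k.+1 l.+1).

Lemma vee_maximal_rows_low (F : {set T}) (r : 'I_l.+1) : vee_maximal le F ->
  r != ord_max -> r \in [set x.2 | x in col_low F].
Proof.
move=> Fmax r_top; have Fvee := Fmax.1.
have /imsetP[y yF yr] : r \in [set x.2 | x in F] by rewrite vee_maximal_rows.
pose in_row z := (z \in F) && (z.2 == r).
have [|[w1 w2] /andP[wF /eqP /= wr] wmax] := @arg_maxnP _ y in_row (fun z : T => val z.1).
  by rewrite /in_row yF yr eqxx.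
case: (boolP ((w1, w2) \in col_low F)) => [wlow | wtop].
  by apply/imsetP; exists (w1, w2).
have {}wtop : (w1, w2) \in col_top F by move: wtop; rewrite inE wF andbT negbK.
exfalso; apply: (vee_maximal_col_gap (c := w1) (t := w2.+1) Fmax).
- by move=> z zF zw; rewrite ltnS; case/col_topP: wtop => _; apply.
- move=> [p1 p2] [s1 s2] pF sF /andP[/= p1w1 w1s1] /= s2w2; apply/negP=> ps.
  have pw : le (p1, p2) (w1, w2) by move: ps; rewrite /grid_le /=; lia.
  have /wmax /= : in_row (s1, s2).
    rewrite /in_row sF -wr /= -val_eqE /=.
    by case: (Fvee _ _ _ pF wF sF pw ps); rewrite /grid_le /=; lia.
  lia.
- by move: r_top (ltn_ord w2); rewrite -wr -val_eqE /=; lia.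
Qed.

Lemma card_vee_maximal_grid (F : {set T}) : vee_maximal le F -> k.+1 + l <= #|F|.
Proof.
move=> Fmax; rewrite card_col_top_low card_col_top vee_maximal_cols // cardsT card_ord.
rewrite leq_add2l; apply: leq_trans (leq_imset_card (fun x : T => x.2) _).
apply: leq_trans (_ : #|[set~ (ord_max : 'I_l.+1)]| <= _); first by rewrite cardsC1 card_ord.
apply/subset_leq_card/subsetP=> r.
by rewrite !inE => /(vee_maximal_rows_low Fmax).
Qed.

End GridLowerBound.

Theorem theorem1p9 (k l : nat) (hk : 1 <= k) (hl : 1 <= l) :
  sat_star vee2_le (@grid_le k l) = k + l - 1 /\
  La_star vee2_le (@grid_le k l) = k + l - 1.
Proof.
case: k hk => // k _; case: l hl => // l _; rewrite addnS subn1 /=.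
have le_refl := @grid_le_refl k.+1 l.+1; have le_trans := @grid_le_trans k.+1 l.+1.
apply: (sat_star_La_star_eq ord0) => F.
  by move/(strong_free_veeP le_refl le_trans); apply: card_vee_free_grid.
by move/(strong_saturated_veeP le_refl le_trans); apply: card_vee_maximal_grid.
Qed.
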